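(* For every positive integer $n$, let $L_n(q)=\operatorname{lcm}\left({n\brack 0}_q,{n\brack 1}_q,\ldots,{n\brack n}_q\right)\in\mathbb{Z}[q]$. Then $$L_n(1)=\lim_{q\to1}L_n(q)=\operatorname{lcm}\left(\binom{n}{0},\binom{n}{1},\ldots,\binom{n}{n}\right).$$ *)

From HB Require Import structures.
From mathcomp Require Import all_boot all_order all_algebra.
Set Implicit Arguments. Unset Strict Implicit. Unset Printing Implicit Defensive.
Import Order.TTheory GRing.Theory Num.Theory.
Local Open Scope ring_scope.

Fixpoint qbinom (n k : nat) : {poly int} :=
  match n, k with
  | _, 0%N => 1
  | 0%N, _.+1 => 0
  | n'.+1, k'.+1 => qbinom n' k' + 'X^(k'.+1) * qbinom n' k
  end.

(* Divisibility in the ring Z[q] (genuine, not up to rational constants). *)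
Definition zpoly_dvd (p r : {poly int}) : Prop := exists s : {poly int}, r = p * s.

Definition is_qbinom_lcm (n : nat) (L : {poly int}) : Prop :=
  (forall k : 'I_n.+1, zpoly_dvd (qbinom n k) L) /\
  (forall M : {poly int}, (forall k : 'I_n.+1, zpoly_dvd (qbinom n k) M) ->
     zpoly_dvd L M).

Definition binom_lcm (n : nat) : nat := \big[lcmn/1%N]_(k < n.+1) 'C(n, k).

From HB Require Import structures.
From mathcomp Require Import all_boot all_order all_algebra cyclotomic algC zify.
Import Order.TTheory GRing.Theory Num.Theory.
Set Implicit Arguments. Unset Strict Implicit. Unset Printing Implicit Defensive.
Local Open Scope ring_scope.

(* Let [m]! = prod_(i < m) (q^(i+1) - 1) (a signed q-factorial) and let Phi_d
   be the d-th cyclotomic polynomial.  As q^m - 1 = prod_(d | m) Phi_d, we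
   get [m]! = prod_d Phi_d ^ (m %/ d), while the q-Pascal recurrence gives
   [n,k]_q * [k]! * [n-k]! = [n]!.  Since n/d - k/d - (n-k)/d is 0 or 1,
   [n,k]_q is the product of the Phi_d, d <= n, for which adding k and n-k
   "carries" modulo d.  Distinct cyclotomic polynomials are coprime (they
   have disjoint sets of complex roots), so the monic product Q_n of all
   Phi_d carrying for some k is an lcm in Z[q], and the only one with
   positive leading coefficient.
   At q = 1, Phi_d(1) > 0 for d > 1 and Phi_d(1) is prime to p unless d is a
   power of p.  Hence Q_n(1) is a multiple of every C(n,k) = [n,k]_1, and
   the p-part of Q_n(1) divides C(n, p^J - 1) for p^J <= n < p^(J+1), since
   for k = p^J - 1 every power of p in the support of Q_n carries. *)

Definition qfact (m : nat) : {poly int} := \prod_(i < m) ('X^(i.+1) - 1).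

Lemma qfactS m : qfact m.+1 = qfact m * ('X^(m.+1) - 1).
Proof. by rewrite /qfact big_ord_recr. Qed.

Lemma qbinom_gt n k : (n < k)%N -> qbinom n k = 0.
Proof.
elim: n k => [|n IHn] [|k] //= lt_nk.
by rewrite !IHn ?mulr0 ?addr0 // ltnW.
Qed.

Lemma qbinom_qfact n k :
  (k <= n)%N -> qbinom n k * (qfact k * qfact (n - k)) = qfact n.
Proof.
elim: n k => [|n IHn] [|k] //=.
- by move=> _; rewrite /qfact !big_ord0 !mulr1.
- by move=> _; rewrite subn0 /qfact big_ord0 !mul1r.
rewrite ltnS subSS => le_kn.
have left_term : qbinom n k * (qfact k.+1 * qfact (n - k))
                 = qfact n * ('X^(k.+1) - 1).
  by rewrite qfactS -(IHn k le_kn) -!mulrA; congr (_ * (_ * _)); apply: mulrC.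
have right_term : qbinom n k.+1 * (qfact k.+1 * qfact (n - k))
                  = qfact n * ('X^(n - k) - 1).
  move: le_kn; rewrite leq_eqVlt => /orP[/eqP-> | lt_kn].
    by rewrite qbinom_gt // mul0r subnn expr0 subrr mulr0.
  by rewrite -(subnSK lt_kn) (qfactS (n - k.+1)) -(IHn k.+1 lt_kn) !mulrA.
rewrite mulrDl -mulrA right_term left_term qfactS -mulrCA -mulrDr; congr (_ * _).
by rewrite mulrBr mulr1 -exprD addrC addrA subrK addSn subnKC.
Qed.

(* At q = 1 the q-Pascal recurrence becomes Pascal's rule. *)
Lemma qbinom_at1 n k : (qbinom n k).[1] = 'C(n, k)%:R.
Proof.
elim: n k => [|n IHn] [|k] /=; rewrite ?hornerE //.
by rewrite !IHn expr1n mul1r binS natrD addrC.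
Qed.

(* d carries when k and n - k are added modulo d; equivalently the exponent
   n/d - k/d - (n-k)/d of Phi_d in [n,k]_q equals 1. *)
Definition carry (n d k : nat) : bool :=
  (0 < d)%N && (d <= k %% d + (n - k) %% d)%N.

Lemma divn_carry n d k :
  (k <= n)%N -> (n %/ d = k %/ d + (n - k) %/ d + carry n d k)%N.
Proof.
move=> le_kn; have [-> | d_gt0] := posnP d; first by rewrite !divn0.
by rewrite /carry d_gt0 -{1}(subnKC le_kn) divnD.
Qed.

(* Only d > 1 can carry, since everything is 0 modulo 1. *)
Lemma carry_gt1 n d k : carry n d k -> (1 < d)%N.
Proof. by case/andP; case: d => [|[|d]] //= _; rewrite !modn1. Qed.

Lemma big_ord_divisors (R : comNzRingType) N m (f : nat -> R) :
  (0 < m)%N -> (m < N)%N ->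
  \prod_(d < N | (d %| m)%N) f d = \prod_(d <- divisors m) f d.
Proof.
move=> m_gt0 lt_mN; rewrite -(big_mkord (fun d => d %| m)%N f) -big_filter.
apply/perm_big/uniq_perm; rewrite ?filter_uniq ?iota_uniq ?divisors_uniq //.
move=> d; rewrite mem_filter mem_iota -dvdn_divisors // add0n subn0.
by case dv_dm: (d %| m)%N; rewrite ?andbF //= (leq_ltn_trans (dvdn_leq _ dv_dm)).
Qed.

(* [m]! = prod_d Phi_d^(m/d), by induction from q^m - 1 = prod_(d | m) Phi_d. *)
Lemma qfact_cyclotomic N m :
  (m < N)%N -> qfact m = \prod_(d < N) 'Phi_d ^+ (m %/ d).
Proof.
elim: m => [|m IHm] lt_mN.
  by rewrite /qfact big_ord0 big1 // => d _; rewrite div0n expr0.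
rewrite qfactS IHm ?(ltnW lt_mN) // -(prod_Cyclotomic (ltn0Sn m)).
rewrite -(big_ord_divisors _ (ltn0Sn m) lt_mN) [X in _ * X]big_mkcond -big_split.
apply: eq_bigr => d _ /=.
have [-> | d_gt0] := posnP d; first by rewrite Cyclotomic0 !divn0 expr0 mul1r.
by rewrite divnS // exprD mulrC; case: ifP; rewrite ?expr1 ?expr0.
Qed.

Definition qbinom_cyclo (n k : nat) : {poly int} :=
  \prod_(d < n.+1 | carry n d k) 'Phi_d.

(* Cyclotomic factorization of Gaussian binomials: cancel [k]! [n-k]! in
   qbinom_qfact, exponent by exponent. *)
Lemma qbinom_cycloE n k : (k <= n)%N -> qbinom n k = qbinom_cyclo n k.
Proof.
move=> le_kn; have := qbinom_qfact le_kn.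
have lt_kn : (k < n.+1)%N by [].
have lt_nkn : (n - k < n.+1)%N by rewrite ltnS leq_subr.
rewrite !(qfact_cyclotomic (ltnSn n)) (qfact_cyclotomic lt_kn).
rewrite (qfact_cyclotomic lt_nkn) => Dn.
have nz : \prod_(d < n.+1) 'Phi_d ^+ (k %/ d)
          * \prod_(d < n.+1) 'Phi_d ^+ ((n - k) %/ d) != 0.
  by rewrite mulf_neq0 // monic_neq0 // monic_prod // => d _;
     apply/monic_exp/Cyclotomic_monic.
apply: (mulIf nz); rewrite /= Dn /qbinom_cyclo [X in _ = X * _]big_mkcond.
rewrite -!big_split /=.
apply: eq_bigr => d _; rewrite (divn_carry d le_kn) !exprD mulrC.
by case: carry; rewrite ?expr1 ?expr0.
Qed.

Lemma Phi_dvd_qbinom_cyclo n d k :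
  carry n d k -> (d < n.+1)%N -> zpoly_dvd 'Phi_d (qbinom_cyclo n k).
Proof.
move=> cd lt_dn; exists (\prod_(i < n.+1 | carry n i k && (i != Ordinal lt_dn)) 'Phi_i).
by rewrite /qbinom_cyclo (bigD1 (Ordinal lt_dn)).
Qed.

Notation pZC := (map_poly (intr : int -> algC)).

Lemma zpoly_dvd_map (p r : {poly int}) : zpoly_dvd p r -> pZC p %| pZC r.
Proof. by case=> s ->; rewrite rmorphM /= dvdp_mulIl. Qed.

(* For monic divisors, divisibility in Z[q] can be tested over algC: the
   remainder of the division in Z[q] is then divisible by the divisor over
   algC although it has smaller degree. *)
Lemma monic_zpoly_dvd (L M : {poly int}) :
  L \is monic -> pZC L %| pZC M -> zpoly_dvd L M.
Proof.
move=> L_monic dvLM; have DM := Pdiv.IdomainMonic.divp_eq L_monic M.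
suff mod0 : M %% L = 0 by exists (M %/ L)%R; rewrite {1}DM mod0 addr0 mulrC.
have size_mod : (size (M %% L)%R < size L)%N by rewrite ltn_modp monic_neq0.
have dv_mod : pZC L %| pZC (M %% L).
  have -> : M %% L = M - M %/ L * L by rewrite {2}DM addrC addKr.
  by rewrite rmorphB rmorphM /= dvdp_sub // dvdp_mull.
apply: contraTeq size_mod => nz; rewrite -leqNgt.
have nzC : pZC (M %% L) != 0.
  by rewrite -size_poly_eq0 size_map_inj_poly ?size_poly_eq0 //; apply: intr_inj.
have := dvdp_leq nzC dv_mod.
by rewrite !size_map_inj_poly //; apply: intr_inj.
Qed.

Lemma PhiC_root d x : (0 < d)%N -> root (pZC 'Phi_d) x = d.-primitive_root x.
Proof.
move=> d_gt0; have [z prim_z] := C_prim_root_exists d_gt0.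
by rewrite (Cintr_Cyclotomic prim_z) (root_cyclotomic prim_z).
Qed.

Lemma prim_root_order_uniq (d e : nat) (x : algC) :
  d.-primitive_root x -> e.-primitive_root x -> d = e.
Proof.
move=> prim_d prim_e; apply/eqP; rewrite eqn_dvd.
rewrite (prim_order_dvd prim_d) (prim_order_dvd prim_e).
by rewrite (prim_expr_order prim_d) (prim_expr_order prim_e) eqxx.
Qed.

(* Distinct cyclotomic polynomials have no common root, so a product of
   distinct ones divides every polynomial that each factor divides. *)
Lemma prod_Phi_dvd (s : seq nat) (P : pred nat) (M : {poly algC}) :
  uniq s -> (forall d, d \in s -> P d -> (0 < d)%N /\ pZC 'Phi_d %| M) ->
  \prod_(d <- s | P d) pZC 'Phi_d %| M.
Proof.
elim: s => [|a s IHs] /=; first by rewrite big_nil dvd1p.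
move=> /andP[a_notin_s uniq_s] dvM; rewrite big_cons.
have dvM_s d : d \in s -> P d -> (0 < d)%N /\ pZC 'Phi_d %| M.
  by move=> ds; apply: dvM; rewrite inE ds orbT.
have dv_prod := IHs uniq_s dvM_s.
case Pa: (P a) => //; have [a_gt0 dv_a] := dvM a (mem_head _ _) Pa.
rewrite Gauss_dvdp ?dv_a //; apply: Pdiv.ClosedField.root_coprimep => x root_a.
rewrite horner_prod prodf_seq_neq0; apply/allP => e es; apply/implyP => Pe.
have [e_gt0 _] := dvM_s e es Pe; apply: contra a_notin_s => /eqP root_e.
rewrite PhiC_root // in root_a; have : root (pZC 'Phi_e) x by apply/eqP.
by rewrite PhiC_root // => /(prim_root_order_uniq root_a) ->.
Qed.

Definition lcm_support (n d : nat) : bool := [exists k : 'I_n.+1, carry n d k].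

Definition qlcm (n : nat) : {poly int} := \prod_(d < n.+1 | lcm_support n d) 'Phi_d.

Lemma lcm_support_gt1 n d : lcm_support n d -> (1 < d)%N.
Proof. by case/existsP => k; apply: carry_gt1. Qed.

Lemma qlcm_monic n : qlcm n \is monic.
Proof. by apply: monic_prod => d _; apply: Cyclotomic_monic. Qed.

Lemma qlcm_split n k : (k <= n)%N ->
  qlcm n = qbinom_cyclo n k
           * \prod_(d < n.+1 | lcm_support n d && ~~ carry n d k) 'Phi_d.
Proof.
move=> le_kn; rewrite /qlcm (bigID (fun d : 'I_n.+1 => carry n d k)) /=.
congr (_ * _); apply: eq_bigl => d; case cd: (carry n d k); rewrite ?andbT ?andbF //.
by apply/existsP; exists (Ordinal (le_kn : (k < n.+1)%N)).
Qed.

(* Q_n is an lcm in Z[q]: each [n,k]_q is a subproduct of it, and each of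
   its pairwise coprime factors divides any common multiple. *)
Lemma qlcm_is_lcm n : is_qbinom_lcm n (qlcm n).
Proof.
split=> [k | M dvM].
  have le_kn : (k <= n)%N by rewrite -ltnS.
  by rewrite (qbinom_cycloE le_kn) (qlcm_split le_kn); eexists.
apply: monic_zpoly_dvd; first exact: qlcm_monic.
rewrite /qlcm rmorph_prod /= -(big_mkord (lcm_support n) (fun d => pZC 'Phi_d)).
apply: prod_Phi_dvd; first exact: iota_uniq.
move=> d; rewrite mem_index_iota => /andP[_ lt_dn] /existsP[k cd].
split; first exact/ltnW/(carry_gt1 cd).
apply: dvdp_trans (zpoly_dvd_map (Phi_dvd_qbinom_cyclo cd lt_dn)) _.
have le_kn : (k <= n)%N by rewrite -ltnS.
by rewrite -(qbinom_cycloE le_kn); apply/zpoly_dvd_map/dvM.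
Qed.

(* Two mutually dividing polynomials with positive leading coefficients are
   equal: the cofactor is a unit of Z[q], i.e. a constant +-1. *)
Lemma zpoly_dvd_antisym (p r : {poly int}) : p != 0 ->
  zpoly_dvd p r -> zpoly_dvd r p -> 0 < lead_coef p -> 0 < lead_coef r -> p = r.
Proof.
move=> p_neq0 [s Dr] [t Dp] lp_gt0 lr_gt0.
have st1 : s * t = 1 by apply: (mulfI p_neq0); rewrite mulr1 mulrA -Dr -Dp.
have : s \is a GRing.unit by apply/unitrP; exists t; rewrite mulrC st1.
rewrite poly_unitE => /andP[/eqP size_s _].
have Ds : s = (lead_coef s)%:P.
  by rewrite lead_coefE size_s; apply: size1_polyC; rewrite size_s.
have ls_gt0 : 0 < lead_coef s by rewrite -(pmulr_rgt0 _ lp_gt0) -lead_coefM -Dr.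
have := congr1 lead_coef st1; rewrite lead_coefM lead_coef1 => /(congr1 absz).
rewrite abszM => /eqP; rewrite muln_eq1 => /andP[/eqP ls1 _].
by rewrite Dr Ds -[lead_coef s]gtz0_abs // ls1 mulr1.
Qed.

(* Phi_1 = q - 1 is the only factor of q^m - 1 vanishing at q = 1. *)
Lemma Phi1 : 'Phi_1 = 'X - 1.
Proof. by have := prod_Cyclotomic (ltn0Sn 0); rewrite big_seq1 expr1. Qed.

Lemma horner1_geom (x : {poly int}) r :
  x.[1] = 1 -> (\sum_(i < r) x ^+ i).[1] = r%:R.
Proof.
move=> x1; rewrite horner_sum (eq_bigr (fun _ => 1)) ?sumr_const ?card_ord //.
by move=> i _; rewrite horner_exp x1 expr1n.
Qed.

(* prod_(d | m, d > 1) Phi_d(1) = m, i.e. (q^m - 1)/(q - 1) at q = 1. *)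
Lemma prod_Phi_at1 m : (0 < m)%N ->
  \prod_(d <- divisors m | d != 1%N) ('Phi_d).[1] = m%:R :> int.
Proof.
move=> m_gt0; have := prod_Cyclotomic m_gt0.
rewrite (bigD1_seq 1%N) ?divisors_uniq -?dvdn_divisors ?dvd1n // Phi1 subrX1.
have nz : ('X - 1 : {poly int}) != 0 by rewrite -polyC1 monic_neq0 ?monicXsubC.
by move=> /(mulfI nz) Dprod; rewrite -horner_prod Dprod horner1_geom ?hornerX.
Qed.

(* Phi_d(1) > 0 for d > 1, by strong induction on d using prod_Phi_at1. *)
Lemma Phi_at1_gt0 d : (1 < d)%N -> 0 < ('Phi_d).[1].
Proof.
elim/ltn_ind: d => d IHd d_gt1; have d_gt0 := ltnW d_gt1.
have := prod_Phi_at1 d_gt0.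
rewrite -big_filter (bigD1_seq d) ?filter_uniq ?divisors_uniq //=; last first.
  by rewrite mem_filter -dvdn_divisors // dvdnn neq_ltn d_gt1 orbT.
set P := \big[_/_]_(i <- _ | _) _ => DP.
suff P_gt0 : 0 < P by rewrite -(pmulr_lgt0 _ P_gt0) DP ltr0n.
rewrite /P big_seq_cond; apply: prodr_gt0 => e /andP[].
rewrite mem_filter -dvdn_divisors // => /andP[e_neq1 dv_ed] e_neq_d.
have e_gt0 : (0 < e)%N by apply: dvdn_gt0 dv_ed.
apply: IHd; first by rewrite ltn_neqAle e_neq_d dvdn_leq.
by rewrite ltn_neqAle eq_sym e_neq1.
Qed.

(* If d > 1 is not a power of p then p does not divide Phi_d(1): writing
   d = a * r with a the p-part, Phi_d divides (q^d - 1)/(q^a - 1), whose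
   value at 1 is r, prime to p. *)
Lemma Phi_at1_coprime p d :
  prime p -> (1 < d)%N -> (d`_p != d)%N -> coprime p `|('Phi_d).[1]|.
Proof.
move=> p_pr d_gt1 not_ppow; have d_gt0 := ltnW d_gt1.
set a := (d`_p)%N; set r := (d`_p^')%N.
have a_gt0 : (0 < a)%N := part_gt0 _ _.
have Dd : d = (a * r)%N by rewrite partnC.
have dv_ad : (a %| d)%N by rewrite Dd dvdn_mulr.
have := prod_Cyclotomic d_gt0; rewrite (bigID (fun e => e %| a)%N) /=.
have -> : \prod_(e <- divisors d | (e %| a)%N) 'Phi_e = \prod_(e <- divisors a) 'Phi_e.
  rewrite -big_filter; apply/perm_big/uniq_perm; rewrite ?filter_uniq ?divisors_uniq //.
  move=> e; rewrite mem_filter -!dvdn_divisors // andbC.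
  by apply/andP/idP => [[]//| dv_ea]; split=> //; apply: dvdn_trans dv_ad.
rewrite prod_Cyclotomic // {2}Dd exprM (subrX1 ('X^a) r).
set Q := \big[_/_]_(i <- _ | _) _.
have nz : ('X^a - 1 : {poly int}) != 0 by rewrite -polyC1 monic_neq0 ?monicXnsubC.
move=> /(mulfI nz) DQ.
have [s DQs] : zpoly_dvd 'Phi_d Q.
  rewrite /Q -big_filter (bigD1_seq d) ?filter_uniq ?divisors_uniq //; first by eexists.
  rewrite mem_filter -dvdn_divisors // dvdnn andbT.
  by apply: contra not_ppow => dv_da; rewrite eqn_dvd dv_ad dv_da.
have : Q.[1] = r%:R by rewrite DQ horner1_geom // hornerXn expr1n.
rewrite DQs hornerM => /(congr1 absz); rewrite abszM natz absz_nat => Er.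
apply: (@coprime_dvdr _ r); first by rewrite -Er dvdn_mulr.
by rewrite prime_coprime // -p'natE // part_pnat.
Qed.

Lemma horner1_prod_Phi n (P : pred 'I_n.+1) :
  (forall d : 'I_n.+1, P d -> (1 < d)%N) ->
  (\prod_(d < n.+1 | P d) 'Phi_d).[1] = (\prod_(d < n.+1 | P d) `|('Phi_d).[1]|)%N%:Z.
Proof.
move=> gt1; rewrite horner_prod (big_morph Posz PoszM (erefl _)).
by apply: eq_bigr => d Pd; rewrite gtz0_abs // Phi_at1_gt0 // gt1.
Qed.

Lemma modn_pred d k : (0 < d)%N -> (d %| k.+1)%N -> (k %% d = d.-1)%N.
Proof.
move=> d_gt0 /dvdnP[[|q] Dq]; first by rewrite mul0n in Dq.
have -> : k = (q * d + d.-1)%N by apply: succn_inj; rewrite Dq; lia.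
by rewrite modnMDl modn_small // prednK.
Qed.

Lemma carry_of_dvd n d k : (0 < d)%N -> (k <= n)%N ->
  (d %| k.+1)%N -> ~~ (d %| n.+1)%N -> carry n d k.
Proof.
move=> d_gt0 le_kn dv_dk ndv_dn; rewrite /carry d_gt0 (modn_pred d_gt0 dv_dk).
have : (0 < (n - k) %% d)%N.
  rewrite lt0n; apply: contra ndv_dn => /eqP mod0.
  by rewrite -(subnK le_kn) -addnS dvdn_add // /dvdn mod0.
move: ((n - k) %% d)%N => r r_gt0; lia.
Qed.

Lemma lcm_support_ndvd n d : lcm_support n d -> ~~ (d %| n.+1)%N.
Proof.
move=> /existsP[k /andP[d_gt0 carry_k]]; apply/negP => dv_dn.
have le_kn : (k <= n)%N by rewrite -ltnS.
have := modn_pred d_gt0 dv_dn; rewrite -{1}(subnKC le_kn) modnD // carry_k mul1n.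
have := ltn_pmod k d_gt0; have := ltn_pmod (n - k) d_gt0.
move: carry_k; lia.
Qed.

Definition qlcm_value (n : nat) : nat :=
  \prod_(d < n.+1 | lcm_support n d) `|('Phi_d).[1]|.

Lemma qlcm_at1 n : (qlcm n).[1] = (qlcm_value n)%:Z.
Proof. by rewrite horner1_prod_Phi // => d; apply: lcm_support_gt1. Qed.

Lemma qlcm_value_split n k : (k <= n)%N ->
  qlcm_value n = ('C(n, k)
    * \prod_(d < n.+1 | lcm_support n d && ~~ carry n d k) `|('Phi_d).[1]|)%N.
Proof.
move=> le_kn; apply/eqP; rewrite -eqz_nat PoszM -qlcm_at1 -horner1_prod_Phi.
  by rewrite (qlcm_split le_kn) hornerM -(qbinom_cycloE le_kn) qbinom_at1 natz.
by move=> d /andP[/lcm_support_gt1].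
Qed.

Lemma qlcm_value_gt0 n : (0 < qlcm_value n)%N.
Proof.
rewrite /qlcm_value big_mkcond /=; apply: prodn_gt0 => d.
by case: ifP => // /lcm_support_gt1 d_gt1; rewrite absz_gt0 gt_eqF ?Phi_at1_gt0.
Qed.

Lemma binom_lcm_dvd_qlcm_value n : (binom_lcm n %| qlcm_value n)%N.
Proof.
apply/dvdn_biglcmP => k _.
by rewrite (qlcm_value_split (_ : (k <= n)%N)) ?dvdn_mulr // -ltnS.
Qed.

(* For each prime p, the p-part of Q_n(1) divides C(n, p^J - 1), where p^J
   is the largest power of p not exceeding n. *)
Lemma qlcm_value_dvd_binom_lcm n : (0 < n)%N -> (qlcm_value n %| binom_lcm n)%N.
Proof.
move=> n_gt0; apply/(dvdn_partP _ (qlcm_value_gt0 n)) => p.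
rewrite mem_primes => /and3P[p_pr _ _]; have p_gt1 := prime_gt1 p_pr.
set J := trunc_log p n; set k := (p ^ J).-1.
have Dk1 : k.+1 = (p ^ J)%N by rewrite prednK // expn_gt0 ltnW.
have le_kn : (k <= n)%N by rewrite -ltnS Dk1; apply/leqW/trunc_logP.
set W := (\prod_(d < n.+1 | lcm_support n d && ~~ carry n d k) `|('Phi_d).[1]|)%N.
have coprime_pW : coprime p W.
  apply: (big_ind (coprime p)) => [|x y|d /andP[supp_d]]; first exact: coprimen1.
    by move=> cx cy; rewrite coprimeMr cx cy.
  move=> no_carry; apply: (Phi_at1_coprime p_pr (lcm_support_gt1 supp_d)).
  apply: contra no_carry => /eqP ppow_d; apply: carry_of_dvd => //.
  - exact/ltnW/(lcm_support_gt1 supp_d).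
  - rewrite Dk1 -ppow_d p_part dvdn_exp2l // trunc_log_max // -p_part ppow_d.
    by rewrite -ltnS.
  - exact: lcm_support_ndvd.
have : ((qlcm_value n)`_p %| 'C(n, k) * W)%N.
  by rewrite -(qlcm_value_split le_kn) dvdn_part.
rewrite Gauss_dvdl ?p_part ?coprimeXl // => /dvdn_trans; apply.
exact: (biglcmn_sup (Ordinal (le_kn : (k < n.+1)%N))).
Qed.

Theorem mainTheorem5 (n : nat) (hn : (0 < n)%N) :
  (exists L : {poly int}, is_qbinom_lcm n L /\ 0 < lead_coef L) /\
  (forall L : {poly int}, is_qbinom_lcm n L -> 0 < lead_coef L ->
     L.[1] = (binom_lcm n)%:Z).
Proof.
have lead_qlcm : lead_coef (qlcm n) = 1 by apply/monicP/qlcm_monic.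
split; first by exists (qlcm n); rewrite lead_qlcm; split=> //; apply: qlcm_is_lcm.
move=> L [L_mul L_least] lead_L.
have [Q_mul Q_least] := qlcm_is_lcm n.
have <- : qlcm n = L.
  apply: zpoly_dvd_antisym (Q_least _ L_mul) (L_least _ Q_mul) _ lead_L.
    exact/monic_neq0/qlcm_monic.
  by rewrite lead_qlcm.
rewrite qlcm_at1; congr Posz; apply/eqP.
by rewrite eqn_dvd binom_lcm_dvd_qlcm_value qlcm_value_dvd_binom_lcm.
Qed.
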